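(* $\lambda<-0.030$, where $$\lambda=\alpha(2)+\sum_{p\ \mathrm{prime}}\alpha(p)-\sum_{j\geq1}\frac1j\left((2\beta_j(2)-1)\prod_{p\geq3\ \mathrm{prime}}\beta_j(p)\right).$$
   Context: For a prime $p$ and an integer $j\geq1$, $\alpha(p)=\left(1-\frac1p\right)\sum_{m\geq1}\frac{1}{p^m}\log\left(1+\frac1p+\cdots+\frac1{p^m}\right)$ and $\beta_j(p)=\left(1-\frac1p\right)\sum_{m\geq0}\frac{1}{p^m}\left(1+\frac1p+\cdots+\frac1{p^m}\right)^{-j}$. (This $\lambda$ is the limit of $\frac1N\sum_{n=1}^N\log\frac{s(2n)}{2n}$, where $s(n)=\sigma(n)-n$ is the sum of the proper divisors of $n$.) *)

From Stdlib Require Import Reals ZArith Znumtheory.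
From Coquelicot Require Import Coquelicot.
Open Scope R_scope.

Definition geomsum (p : R) (m : nat) : R := sum_f_R0 (fun k => (/ p) ^ k) m.

(* term of index n corresponds to m = n+1 (the sum over m >= 1) *)
Definition alpha_term (p : R) (n : nat) : R :=
  (/ p) ^ (S n) * ln (geomsum p (S n)).
Definition alpha (p : R) : R := (1 - / p) * Series (alpha_term p).

Definition beta_term (j : nat) (p : R) (m : nat) : R :=
  (/ p) ^ m * / (geomsum p m) ^ j.
Definition beta (j : nat) (p : R) : R := (1 - / p) * Series (beta_term j p).

Definition isprime (n : nat) : bool :=
  if prime_dec (Z.of_nat n) then true else false.

(* sum over all primes p of alpha(p), as a series indexed by n : nat *)
Definition alpha_prime_term (n : nat) : R := if isprime n then alpha (INR n) else 0.

Fixpoint beta_partial_prod (j : nat) (N : nat) : R :=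
  match N with
  | O => 1
  | S n => beta_partial_prod j n *
           (if andb (isprime (S n)) (Nat.leb 3 (S n)) then beta j (INR (S n)) else 1)
  end.

Definition beta_prod (j : nat) : R := real (Lim_seq (beta_partial_prod j)).

(* term of index n corresponds to j = n+1 (the sum over j >= 1) *)
Definition lambda_term (n : nat) : R :=
  / INR (S n) * ((2 * beta (S n) 2 - 1) * beta_prod (S n)).

Definition lambda : R := alpha 2 + Series alpha_prime_term - Series lambda_term.

From Stdlib Require Import Reals ZArith Znumtheory Lra Lia QArith Qreals Qminmax.
From Coquelicot Require Import Coquelicot.
Open Scope R_scope.

(** The terms of [alpha p] and [beta j p] are dominated by geometric series in [1/p], and
    [0 <= 2 beta_j(2) - 1 <= (2/3)^j], so all the series and the infinite product converge.
    The inequality [lambda < -0.030] is then a numerical evaluation in exact rational arithmetic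
    with directed dyadic rounding.  For primes [p <= 50] the series [alpha p] and [beta j p] are
    truncated, [ln (1 + u)] being bounded above by its Taylor polynomial of degree 11 and the tails
    by geometric series; the primes [50 < p <= 1000] only use [alpha p <= 1/(p(p-1))] and
    [beta j p >= 1 - j/p^2].  Beyond [N = 1000] the first bound telescopes to [1/N] and the second
    bounds the rest of the product below by [1 - j/N]; finally the series over [j], whose terms
    are nonnegative, is truncated at [j = 12]. *)

Definition ln1p_taylor (u : R) : R :=
  u * (1 - u * (/2 - u * (/3 - u * (/4 - u * (/5 - u * (/6 - u * (/7 - u * (/8 - u * (/9
    - u * (/10 - u * /11)))))))))).

Lemma ln1p_le_taylor (u : R) : 0 <= u -> ln (1 + u) <= ln1p_taylor u.
Proof.
  intros Hu.
  set (f := fun t => ln1p_taylor t - ln (1 + t)).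
  (* [f 0 = 0] and [f' t = t ^ 11 / (1 + t) >= 0] *)
  assert (Hf' : forall t, 0 <= t -> is_derive f t (t ^ 11 / (1 + t))).
  { intros t Ht. unfold f, ln1p_taylor. auto_derive; [lra | field; lra]. }
  destruct (MVT_gen f 0 u (fun t => t ^ 11 / (1 + t))) as [c [Hc Hfu]].
  - intros t Ht. rewrite Rmin_left in Ht by lra. apply Hf'. lra.
  - intros t Ht. rewrite Rmin_left in Ht by lra. apply continuity_pt_filterlim.
    apply (ex_derive_continuous (K := R_AbsRing) (V := R_NormedModule) f t).
    eexists. apply Hf'. lra.
  - rewrite Rmin_left, Rmax_right in Hc by lra.
    unfold f, ln1p_taylor in Hfu. rewrite Rplus_0_r, ln_1 in Hfu.
    assert (0 <= c ^ 11 / (1 + c)) by (apply Rdiv_le_0_compat; [apply pow_le|]; lra).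
    unfold ln1p_taylor. nra.
Qed.

Lemma ln_le_sub_1 (y : R) : 0 < y -> ln y <= y - 1.
Proof. intros Hy. pose proof (exp_ineq1_le (ln y)) as Hexp. rewrite exp_ln in Hexp; lra. Qed.

Lemma pow_1_sub_ge (x : R) (j : nat) : 0 <= x <= 1 -> 1 - INR j * x <= (1 - x) ^ j.
Proof.
  intros Hx. induction j as [|j IH]; [simpl; lra|].
  rewrite S_INR. simpl pow.
  pose proof (pos_INR j). pose proof (pow_le (1 - x) j ltac:(lra)). nra.
Qed.

Lemma is_series_scal_geom (c q : R) :
  Rabs q < 1 -> is_series (fun n => c * q ^ n) (c / (1 - q)).
Proof.
  intros Hq. apply (is_series_scal_l (K := R_AbsRing) (V := R_NormedModule) c).
  exact (is_series_geom q Hq).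
Qed.

Lemma ex_series_le_nonneg (a b : nat -> R) :
  (forall n, 0 <= a n <= b n) -> ex_series b -> ex_series a.
Proof.
  intros Hab Hb. apply (ex_series_le a b); [|exact Hb].
  intros n. change (norm (a n)) with (Rabs (a n)). rewrite Rabs_pos_eq; apply Hab.
Qed.

Lemma Series_le_scal_geom (a : nat -> R) (c q : R) :
  Rabs q < 1 -> (forall n, 0 <= a n <= c * q ^ n) -> Series a <= c / (1 - q).
Proof.
  intros Hq Ha. rewrite <- (is_series_unique _ _ (is_series_scal_geom c q Hq)).
  apply Series_le; [exact Ha|]. eexists. exact (is_series_scal_geom c q Hq).
Qed.

Lemma scal_geom_le_Series (a : nat -> R) (c q : R) :
  Rabs q < 1 -> 0 <= c -> 0 <= q -> (forall n, c * q ^ n <= a n) -> ex_series a ->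
  c / (1 - q) <= Series a.
Proof.
  intros Hq Hc Hq0 Ha Hex. rewrite <- (is_series_unique _ _ (is_series_scal_geom c q Hq)).
  apply Series_le; [|exact Hex]. intros n. split; [|apply Ha].
  apply Rmult_le_pos; [exact Hc | apply pow_le, Hq0].
Qed.

Lemma Series_nonneg (a : nat -> R) : (forall n, 0 <= a n) -> ex_series a -> 0 <= Series a.
Proof.
  intros Ha Hex. replace 0 with (0 / (1 - 0)) by field.
  apply scal_geom_le_Series; try lra; [rewrite Rabs_R0; lra | intros n; rewrite Rmult_0_l; apply Ha | exact Hex].
Qed.

(** * Geometric sums, [alpha] and [beta] *)

Lemma geomsum_0 (p : R) : geomsum p 0 = 1.
Proof. unfold geomsum. simpl. ring. Qed.

Lemma geomsum_S (p : R) (m : nat) : geomsum p (S m) = geomsum p m + (/ p) ^ S m.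
Proof. reflexivity. Qed.

Section GeometricWeights.
Variable p : R.
Hypothesis Hp : 1 < p.

Lemma inv_bounds : 0 < / p < 1.
Proof.
  split; [apply Rinv_0_lt_compat; lra|].
  rewrite <- Rinv_1. apply Rinv_lt_contravar; lra.
Qed.

Lemma Rabs_inv_lt_1 : Rabs (/ p) < 1.
Proof. pose proof inv_bounds. rewrite Rabs_pos_eq; lra. Qed.

Lemma geomsum_ge_1 (m : nat) : 1 <= geomsum p m.
Proof.
  pose proof inv_bounds. induction m as [|m IH]; [rewrite geomsum_0; lra|].
  rewrite geomsum_S. pose proof (pow_le (/ p) (S m)). lra.
Qed.

Lemma geomsum_le (m : nat) : geomsum p m <= / (1 - / p).
Proof.
  pose proof inv_bounds. unfold geomsum. rewrite tech3 by lra. unfold Rdiv.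
  rewrite <- (Rmult_1_l (/ (1 - / p))) at 2.
  apply Rmult_le_compat_r; [apply Rlt_le, Rinv_0_lt_compat; lra|].
  pose proof (pow_lt (/ p) (S m)). lra.
Qed.

Lemma geomsum_ge_1_add_inv (m : nat) : (1 <= m)%nat -> 1 + / p <= geomsum p m.
Proof.
  pose proof inv_bounds. induction 1 as [|m _ IH].
  - rewrite geomsum_S, geomsum_0. simpl. lra.
  - rewrite geomsum_S. pose proof (pow_le (/ p) (S m)). lra.
Qed.

Lemma ln_geomsum_le (m : nat) : ln (geomsum p m) <= / p / (1 - / p).
Proof.
  pose proof inv_bounds. pose proof (geomsum_ge_1 m). pose proof (geomsum_le m).
  eapply Rle_trans; [apply ln_le_sub_1; lra|].
  replace (/ p / (1 - / p)) with (/ (1 - / p) - 1) by (field; lra). lra.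
Qed.

Lemma ln_geomsum_S_le (m : nat) (L u : R) :
  ln (geomsum p m) <= L -> (/ p) ^ S m / geomsum p m <= u ->
  ln (geomsum p (S m)) <= L + ln1p_taylor u.
Proof.
  intros HL Hu. pose proof inv_bounds. pose proof (geomsum_ge_1 m).
  assert (Hv : 0 < (/ p) ^ S m / geomsum p m) by (apply Rdiv_lt_0_compat; [apply pow_lt|]; lra).
  rewrite geomsum_S.
  replace (geomsum p m + (/ p) ^ S m)
    with (geomsum p m * (1 + (/ p) ^ S m / geomsum p m)) by (field; lra).
  rewrite ln_mult by lra. apply Rplus_le_compat; [exact HL|].
  apply Rle_trans with (ln (1 + u)); [apply ln_le; lra | apply ln1p_le_taylor; lra].
Qed.

Lemma alpha_term_ge_0 (n : nat) : 0 <= alpha_term p n.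
Proof.
  pose proof inv_bounds. unfold alpha_term. apply Rmult_le_pos; [apply pow_le; lra|].
  rewrite <- ln_1. apply ln_le; [lra | apply geomsum_ge_1].
Qed.

Lemma alpha_term_le (n : nat) : alpha_term p n <= (/ p) ^ 2 / (1 - / p) * (/ p) ^ n.
Proof.
  pose proof inv_bounds. unfold alpha_term.
  replace ((/ p) ^ 2 / (1 - / p) * (/ p) ^ n) with ((/ p) ^ S n * (/ p / (1 - / p)))
    by (simpl; field; lra).
  apply Rmult_le_compat_l; [apply pow_le; lra | apply ln_geomsum_le].
Qed.

Lemma ex_series_alpha_term : ex_series (alpha_term p).
Proof.
  apply (ex_series_le_nonneg _ (fun n => (/ p) ^ 2 / (1 - / p) * (/ p) ^ n)).
  - intros n. split; [apply alpha_term_ge_0 | apply alpha_term_le].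
  - eexists. apply is_series_scal_geom, Rabs_inv_lt_1.
Qed.

Lemma alpha_ge_0 : 0 <= alpha p.
Proof.
  pose proof inv_bounds. unfold alpha. apply Rmult_le_pos; [lra|].
  apply Series_nonneg; [apply alpha_term_ge_0 | apply ex_series_alpha_term].
Qed.

Lemma alpha_le : alpha p <= / (p * (p - 1)).
Proof.
  pose proof inv_bounds. unfold alpha.
  eapply Rle_trans.
  { apply Rmult_le_compat_l; [lra|].
    apply (Series_le_scal_geom _ ((/ p) ^ 2 / (1 - / p)) _ Rabs_inv_lt_1).
    intros n. split; [apply alpha_term_ge_0 | apply alpha_term_le]. }
  right. field. lra.
Qed.

(* The tail is bounded by [alpha_term_le]. *)
Lemma alpha_le_trunc (M : nat) (L : nat -> R) :
  (forall m, (1 <= m <= S M)%nat -> ln (geomsum p m) <= L m) ->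
  alpha p <= (1 - / p) * (sum_f_R0 (fun k => (/ p) ^ S k * L (S k)) M
                          + (/ p) ^ S (S (S M)) / (1 - / p) ^ 2).
Proof.
  intros HL. pose proof inv_bounds. unfold alpha.
  apply Rmult_le_compat_l; [lra|].
  rewrite (Series_incr_n _ (S M)) by (lia || apply ex_series_alpha_term). simpl pred.
  apply Rplus_le_compat.
  - apply sum_Rle. intros n Hn. unfold alpha_term.
    apply Rmult_le_compat_l; [apply pow_le; lra | apply HL; lia].
  - replace ((/ p) ^ S (S (S M)) / (1 - / p) ^ 2)
      with ((/ p) ^ 2 / (1 - / p) * (/ p) ^ S M / (1 - / p)) by (simpl; field; lra).
    apply (Series_le_scal_geom _ _ _ Rabs_inv_lt_1). intros n. split.
    + apply alpha_term_ge_0.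
    + eapply Rle_trans; [apply alpha_term_le|]. rewrite pow_add. right. ring.
Qed.

Lemma beta_term_ge_0 (j m : nat) : 0 <= beta_term j p m.
Proof.
  pose proof inv_bounds. pose proof (geomsum_ge_1 m). unfold beta_term.
  apply Rmult_le_pos; [apply pow_le; lra|].
  apply Rlt_le, Rinv_0_lt_compat, pow_lt. lra.
Qed.

Lemma inv_geomsum_pow_bounds (j m : nat) :
  (1 - / p) ^ j <= / geomsum p m ^ j <= 1.
Proof.
  pose proof inv_bounds. pose proof (geomsum_ge_1 m). pose proof (geomsum_le m).
  rewrite <- pow_inv. split.
  - apply pow_incr. split; [lra|].
    rewrite <- (Rinv_inv (1 - / p)). apply Rinv_le_contravar; lra.
  - rewrite <- (pow1 j). apply pow_incr. split.
    + apply Rlt_le, Rinv_0_lt_compat. lra.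
    + rewrite <- Rinv_1. apply Rinv_le_contravar; lra.
Qed.

Lemma beta_term_le (j m : nat) : beta_term j p m <= 1 * (/ p) ^ m.
Proof.
  pose proof inv_bounds. pose proof (inv_geomsum_pow_bounds j m) as Hg. unfold beta_term.
  rewrite Rmult_1_l. rewrite <- (Rmult_1_r ((/ p) ^ m)) at 2.
  apply Rmult_le_compat_l; [apply pow_le; lra | apply Hg].
Qed.

Lemma ex_series_beta_term (j : nat) : ex_series (beta_term j p).
Proof.
  apply (ex_series_le_nonneg _ (fun n => 1 * (/ p) ^ n)).
  - intros n. split; [apply beta_term_ge_0 | apply beta_term_le].
  - eexists. apply is_series_scal_geom, Rabs_inv_lt_1.
Qed.

Lemma beta_ge_0 (j : nat) : 0 <= beta j p.
Proof.
  pose proof inv_bounds. unfold beta. apply Rmult_le_pos; [lra|].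
  apply Series_nonneg; [apply beta_term_ge_0 | apply ex_series_beta_term].
Qed.

Lemma beta_le_1 (j : nat) : beta j p <= 1.
Proof.
  pose proof inv_bounds. unfold beta.
  eapply Rle_trans.
  { apply Rmult_le_compat_l; [lra|].
    apply (Series_le_scal_geom _ 1 _ Rabs_inv_lt_1).
    intros n. split; [apply beta_term_ge_0 | apply beta_term_le]. }
  right. field. lra.
Qed.

(* The tail is bounded below using [/ geomsum p m >= 1 - / p]. *)
Lemma beta_ge_trunc (j M : nat) :
  (1 - / p) * sum_f_R0 (beta_term j p) M + (/ p) ^ S M * (1 - / p) ^ j <= beta j p.
Proof.
  pose proof inv_bounds. unfold beta.
  rewrite (Series_incr_n _ (S M)) by (lia || apply ex_series_beta_term). simpl pred.
  rewrite Rmult_plus_distr_l. apply Rplus_le_compat_l.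
  replace ((/ p) ^ S M * (1 - / p) ^ j)
    with ((1 - / p) * (((/ p) ^ S M * (1 - / p) ^ j) / (1 - / p))) by (field; lra).
  apply Rmult_le_compat_l; [lra|].
  apply scal_geom_le_Series.
  - apply Rabs_inv_lt_1.
  - apply Rmult_le_pos; apply pow_le; lra.
  - lra.
  - intros n. unfold beta_term. rewrite pow_add.
    replace ((/ p) ^ S M * (1 - / p) ^ j * (/ p) ^ n)
      with ((/ p) ^ S M * (/ p) ^ n * (1 - / p) ^ j) by ring.
    apply Rmult_le_compat_l; [apply Rmult_le_pos; apply pow_le; lra|].
    apply inv_geomsum_pow_bounds.
  - apply (ex_series_incr_n (beta_term j p) (S M)), ex_series_beta_term.
Qed.

Lemma beta_ge_1_sub (j : nat) : 1 - INR j * (/ p * / p) <= beta j p.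
Proof.
  pose proof inv_bounds. eapply Rle_trans; [|apply (beta_ge_trunc j 0)].
  simpl sum_f_R0. unfold beta_term. rewrite geomsum_0, pow1. simpl pow.
  pose proof (pow_1_sub_ge (/ p) j ltac:(lra)). nra.
Qed.

End GeometricWeights.

Lemma two_beta_2_sub_1_bounds (j : nat) : 0 <= 2 * beta j 2 - 1 <= (2 / 3) ^ j.
Proof.
  assert (Hlt12 : 1 < 2) by lra.
  assert (Hex : ex_series (fun k => beta_term j 2 (S k)))
    by apply (ex_series_incr_n (beta_term j 2) 1), ex_series_beta_term, Hlt12.
  assert (Hb : 2 * beta j 2 - 1 = Series (fun k => beta_term j 2 (S k))).
  { unfold beta. rewrite (Series_incr_1 _ (ex_series_beta_term 2 Hlt12 j)).
    unfold beta_term at 1. rewrite geomsum_0, pow1. simpl. field. }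
  rewrite Hb. split.
  - apply Series_nonneg; [intros; apply beta_term_ge_0; lra | exact Hex].
  - replace ((2 / 3) ^ j) with ((2 / 3) ^ j * / 2 / (1 - / 2)) by field.
    apply Series_le_scal_geom; [apply Rabs_inv_lt_1; lra|]. intros n. split.
    + apply beta_term_ge_0; lra.
    + (* [geomsum 2 (S n) >= 3 / 2] *)
      unfold beta_term. simpl pow.
      replace ((2 / 3) ^ j * / 2 * (/ 2) ^ n) with (/ 2 * (/ 2) ^ n * (/ (3 / 2)) ^ j) by
        (replace (/ (3 / 2)) with (2 / 3) by field; ring).
      apply Rmult_le_compat_l; [apply Rmult_le_pos; [lra | apply pow_le; lra]|].
      pose proof (geomsum_ge_1_add_inv 2 Hlt12 (S n) ltac:(lia)).
      rewrite <- pow_inv. apply pow_incr. split.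
      * apply Rlt_le, Rinv_0_lt_compat. lra.
      * apply Rinv_le_contravar; lra.
Qed.

Lemma INR_gt_1 (n : nat) : (2 <= n)%nat -> 1 < INR n.
Proof. intros Hn. apply le_INR in Hn. simpl in Hn. lra. Qed.

(** * The product over primes *)

Definition beta_factor (j n : nat) : R :=
  if andb (isprime (S n)) (Nat.leb 3 (S n)) then beta j (INR (S n)) else 1.

Lemma beta_partial_prod_S (j n : nat) :
  beta_partial_prod j (S n) = beta_partial_prod j n * beta_factor j n.
Proof. reflexivity. Qed.

Lemma beta_factor_bounds (j n : nat) : 0 <= beta_factor j n <= 1.
Proof.
  unfold beta_factor. destruct (andb _ _) eqn:E; [|lra].
  apply andb_prop in E as [_ E]. apply Nat.leb_le in E.
  split; [apply beta_ge_0 | apply beta_le_1]; apply INR_gt_1; lia.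
Qed.

Lemma beta_factor_ge (j n : nat) : 1 - INR j * / INR (S n) ^ 2 <= beta_factor j n.
Proof.
  pose proof (pos_INR j). pose proof (lt_0_INR (S n) ltac:(lia)).
  assert (0 <= / INR (S n) ^ 2) by (apply Rlt_le, Rinv_0_lt_compat, pow_lt; lra).
  unfold beta_factor. destruct (andb _ _) eqn:E; [|nra].
  apply andb_prop in E as [_ E]. apply Nat.leb_le in E.
  replace (/ INR (S n) ^ 2) with (/ INR (S n) * / INR (S n)) by (field; lra).
  apply beta_ge_1_sub, INR_gt_1. lia.
Qed.

Lemma beta_partial_prod_bounds (j n : nat) : 0 <= beta_partial_prod j n <= 1.
Proof.
  induction n as [|n IH]; [simpl; lra|].
  rewrite beta_partial_prod_S. pose proof (beta_factor_bounds j n). nra.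
Qed.

Lemma beta_partial_prod_decr (j n : nat) : beta_partial_prod j (S n) <= beta_partial_prod j n.
Proof.
  rewrite beta_partial_prod_S.
  pose proof (beta_factor_bounds j n). pose proof (beta_partial_prod_bounds j n). nra.
Qed.

Lemma ex_finite_lim_beta_partial_prod (j : nat) : ex_finite_lim_seq (beta_partial_prod j).
Proof.
  apply (ex_finite_lim_seq_decr _ 0); [apply beta_partial_prod_decr|].
  intros n. apply beta_partial_prod_bounds.
Qed.

Lemma is_lim_beta_prod (j : nat) : is_lim_seq (beta_partial_prod j) (beta_prod j).
Proof.
  destruct (ex_finite_lim_beta_partial_prod j) as [l Hl].
  unfold beta_prod. rewrite (is_lim_seq_unique _ _ Hl). exact Hl.
Qed.

Lemma beta_prod_bounds (j : nat) : 0 <= beta_prod j <= 1.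
Proof.
  pose proof (is_lim_beta_prod j) as Hlim. split.
  - refine (is_lim_seq_le (fun _ => 0) _ 0 _ _ (is_lim_seq_const 0) Hlim).
    intros n. apply beta_partial_prod_bounds.
  - refine (is_lim_seq_le _ (fun _ => 1) _ 1 _ Hlim (is_lim_seq_const 1)).
    intros n. apply beta_partial_prod_bounds.
Qed.

Lemma one_sub_add_le_mul (t s : R) : 0 <= t <= 1 -> 0 <= s -> 1 - (t + s) <= (1 - t) * (1 - s).
Proof. intros. nra. Qed.

Lemma inv_succ_sq_le (m : R) : 0 < m -> / (m + 1) ^ 2 <= / m - / (m + 1).
Proof.
  intros Hm. replace (/ m - / (m + 1)) with (/ (m * (m + 1))) by (field; lra).
  apply Rinv_le_contravar; [apply Rmult_lt_0_compat; lra | nra].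
Qed.

(* Since [beta_factor j n >= 1 - j / (n + 1) ^ 2] and [1 / (n + 1) ^ 2 <= 1 / n - 1 / (n + 1)],
   the factors beyond [N] cost at most [1 - j / N] in total. *)
Lemma beta_partial_prod_tail_ge (j N k : nat) : (1 <= N)%nat -> INR j <= INR N ->
  beta_partial_prod j N * (1 - INR j * (/ INR N - / INR (N + k))) <= beta_partial_prod j (N + k).
Proof.
  intros HN HjN. induction k as [|k IH].
  { rewrite Nat.add_0_r. right. ring. }
  rewrite Nat.add_succ_r, beta_partial_prod_S.
  pose proof (beta_partial_prod_bounds j N). pose proof (beta_factor_bounds j (N + k)).
  pose proof (beta_factor_ge j (N + k)) as Hf. pose proof (pos_INR j).
  assert (HNk : INR N <= INR (N + k)) by (apply le_INR; lia).
  assert (HN0 : 0 < INR N) by (apply lt_0_INR; lia).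
  rewrite S_INR in *. set (m := INR (N + k)) in *.
  set (t := INR j * (/ INR N - / m)). set (s := INR j * / (m + 1) ^ 2).
  assert (Ht : 0 <= t <= 1).
  { assert (/ m <= / INR N) by (apply Rinv_le_contravar; lra).
    assert (INR j * / INR N <= 1) by
      (apply (Rmult_le_reg_r (INR N)); [lra | rewrite Rmult_assoc, Rinv_l; lra]).
    assert (0 < / m) by (apply Rinv_0_lt_compat; lra).
    unfold t. split; [apply Rmult_le_pos; lra | nra]. }
  assert (Hs : 0 <= s <= INR j * (/ m - / (m + 1))).
  { unfold s. split.
    - apply Rmult_le_pos; [lra | apply Rlt_le, Rinv_0_lt_compat, pow_lt; lra].
    - apply Rmult_le_compat_l; [lra | apply inv_succ_sq_le; lra]. }
  apply Rle_trans with (beta_partial_prod j N * ((1 - t) * (1 - s))).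
  - apply Rmult_le_compat_l; [lra|].
    eapply Rle_trans; [|apply one_sub_add_le_mul; lra]. unfold t. lra.
  - rewrite <- Rmult_assoc. apply Rle_trans with (beta_partial_prod j N * (1 - t) * beta_factor j (N + k)).
    + apply Rmult_le_compat_l; [apply Rmult_le_pos; lra | exact Hf].
    + apply Rmult_le_compat_r; [lra | exact IH].
Qed.

Lemma beta_prod_ge (j N : nat) : (1 <= N)%nat -> INR j <= INR N ->
  beta_partial_prod j N * (1 - INR j / INR N) <= beta_prod j.
Proof.
  intros HN HjN.
  refine (is_lim_seq_le_loc _ _ _ _ _ (is_lim_seq_const _) (is_lim_beta_prod j)).
  exists N. intros n Hn. replace n with (N + (n - N))%nat by lia.
  eapply Rle_trans; [|apply beta_partial_prod_tail_ge; assumption].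
  apply Rmult_le_compat_l; [apply beta_partial_prod_bounds|].
  pose proof (pos_INR j).
  assert (0 < / INR (N + (n - N))) by (apply Rinv_0_lt_compat, lt_0_INR; lia).
  unfold Rdiv. nra.
Qed.

(** * The series over primes and over [j] *)

Lemma is_series_telescoping (a : nat -> R) :
  is_lim_seq a 0 -> is_series (fun n => a n - a (S n)) (a O).
Proof.
  intros Ha.
  assert (Hsum : forall n, a O - a (S n) = sum_n (fun n => a n - a (S n)) n).
  { intros n. rewrite sum_n_Reals. induction n as [|n IH]; simpl; [ring | rewrite <- IH; ring]. }
  assert (Hlim : is_lim_seq (fun n => a O - a (S n)) (a O - 0)).
  { apply (is_lim_seq_minus' _ _ _ _ (is_lim_seq_const _)).
    exact (proj1 (is_lim_seq_incr_1 a 0) Ha). }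
  rewrite Rminus_0_r in Hlim. exact (is_lim_seq_ext _ _ _ Hsum Hlim).
Qed.

Lemma is_series_inv_INR_diff (N : nat) :
  is_series (fun k => / INR (N + k) - / INR (S (N + k))) (/ INR N).
Proof.
  replace (/ INR N) with (/ INR (N + 0)) by (rewrite Nat.add_0_r; reflexivity).
  apply (is_series_ext (fun k => / INR (N + k) - / INR (N + S k))).
  { intros k. rewrite Nat.add_succ_r. reflexivity. }
  apply (is_series_telescoping (fun k => / INR (N + k))).
  apply (is_lim_seq_ext (fun k => / INR (k + N))); [intros k; rewrite Nat.add_comm; reflexivity|].
  pose proof (is_lim_seq_inv _ _ (proj1 (is_lim_seq_incr_n INR N p_infty) is_lim_seq_INR)) as Hinv.
  apply Hinv. discriminate.
Qed.

Lemma alpha_prime_term_succ_bounds (n : nat) : (1 <= n)%nat ->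
  0 <= alpha_prime_term (S n) <= / INR n - / INR (S n).
Proof.
  intros Hn. unfold alpha_prime_term.
  assert (Hn0 : 0 < INR n) by (apply lt_0_INR; lia).
  assert (Hdiff : / INR n - / INR (S n) = / (INR (S n) * (INR (S n) - 1)))
    by (rewrite S_INR; field; lra).
  rewrite Hdiff. destruct (isprime (S n)).
  - assert (Hp : 1 < INR (S n)) by (apply INR_gt_1; lia).
    split; [apply alpha_ge_0 | apply alpha_le]; exact Hp.
  - split; [lra|]. apply Rlt_le, Rinv_0_lt_compat. rewrite S_INR. nra.
Qed.

Lemma ex_series_alpha_prime_term : ex_series alpha_prime_term.
Proof.
  apply (ex_series_incr_n alpha_prime_term 2).
  apply (ex_series_le_nonneg _ (fun k => / INR (1 + k) - / INR (S (1 + k)))).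
  - intros k. apply alpha_prime_term_succ_bounds. lia.
  - eexists. apply is_series_inv_INR_diff.
Qed.

Lemma Series_alpha_prime_term_le (N : nat) : (1 <= N)%nat ->
  Series alpha_prime_term <= sum_f_R0 alpha_prime_term N + / INR N.
Proof.
  intros HN.
  rewrite (Series_incr_n _ (S N)) by (lia || apply ex_series_alpha_prime_term). simpl pred.
  apply Rplus_le_compat_l.
  rewrite <- (is_series_unique _ _ (is_series_inv_INR_diff N)).
  apply Series_le; [|eexists; apply is_series_inv_INR_diff].
  intros k. apply alpha_prime_term_succ_bounds. lia.
Qed.

Lemma lambda_term_bounds (n : nat) : 0 <= lambda_term n <= 2 / 3 * (2 / 3) ^ n.
Proof.
  unfold lambda_term.
  pose proof (two_beta_2_sub_1_bounds (S n)) as Hb. pose proof (beta_prod_bounds (S n)).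
  assert (Hj : 0 < / INR (S n) <= 1).
  { split; [apply Rinv_0_lt_compat, lt_0_INR; lia|].
    rewrite <- Rinv_1. apply Rinv_le_contravar; [lra|]. rewrite S_INR. pose proof (pos_INR n). lra. }
  simpl pow in Hb. split.
  - apply Rmult_le_pos; [lra | apply Rmult_le_pos; lra].
  - apply Rle_trans with (1 * ((2 * beta (S n) 2 - 1) * 1)); [|lra].
    apply Rmult_le_compat; try lra; [apply Rmult_le_pos; lra|].
    apply Rmult_le_compat_l; lra.
Qed.

Lemma ex_series_lambda_term : ex_series lambda_term.
Proof.
  apply (ex_series_le_nonneg _ (fun n => 2 / 3 * (2 / 3) ^ n)); [apply lambda_term_bounds|].
  eexists. apply is_series_scal_geom. rewrite Rabs_pos_eq; lra.
Qed.

Lemma sum_lambda_term_le_Series (J : nat) : sum_f_R0 lambda_term J <= Series lambda_term.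
Proof.
  rewrite (Series_incr_n _ (S J)) by (lia || apply ex_series_lambda_term). simpl pred.
  assert (0 <= Series (fun k => lambda_term (S J + k))); [|lra].
  apply Series_nonneg; [intros; apply lambda_term_bounds|].
  apply (ex_series_incr_n lambda_term (S J)), ex_series_lambda_term.
Qed.

(** * Rational certificate *)

Lemma Q2R_inv_nz (q : Q) : Q2R q <> 0 -> Q2R (/ q) = / Q2R q.
Proof.
  intros Hq. apply Q2R_inv. intros E. apply Hq. rewrite (Qeq_eqR _ _ E). apply RMicromega.Q2R_0.
Qed.

Lemma Q2R_div_nz (a b : Q) : Q2R b <> 0 -> Q2R (a / b) = Q2R a / Q2R b.
Proof. intros Hb. unfold Qdiv. rewrite Q2R_mult, Q2R_inv_nz by exact Hb. reflexivity. Qed.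

Lemma Q2R_Qred (q : Q) : Q2R (Qred q) = Q2R q.
Proof. apply Qeq_eqR, Qred_correct. Qed.

Lemma Q2R_Qmax_0 (q : Q) : Q2R (Qmax 0 q) = Rmax 0 (Q2R q).
Proof.
  destruct (Q.max_spec_le 0 q) as [[Hq E]|[Hq E]]; rewrite (Qeq_eqR _ _ E);
    apply Qle_Rle in Hq; rewrite RMicromega.Q2R_0 in *.
  - rewrite Rmax_right; lra.
  - rewrite Rmax_left; lra.
Qed.

Open Scope Q_scope.

Fixpoint Qpow_nat (q : Q) (k : nat) : Q :=
  match k with O => 1 | S k => q * Qpow_nat q k end.

Definition Qnat (n : nat) : Q := inject_Z (Z.of_nat n).

(* Directed rounding to the grid [2^-40 Z] keeps the rationals of the certificate small. *)
Definition dyadic_den : positive := Eval vm_compute in Pos.pow 2 40.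

Definition Qround_down (q : Q) : Q := Z.div (Qnum q * Zpos dyadic_den) (Zpos (Qden q)) # dyadic_den.

Definition Qround_up (q : Q) : Q := - Qround_down (- q).

Definition Qln1p_taylor (u : Q) : Q :=
  u * (1 - u * ((1#2) - u * ((1#3) - u * ((1#4) - u * ((1#5) - u * ((1#6) - u * ((1#7)
    - u * ((1#8) - u * ((1#9) - u * ((1#10) - u * (1#11))))))))))).

Close Scope Q_scope.

Lemma Q2R_Qpow_nat (q : Q) (k : nat) : Q2R (Qpow_nat q k) = Q2R q ^ k.
Proof.
  induction k as [|k IH]; simpl; [apply RMicromega.Q2R_1 | rewrite Q2R_mult, IH; reflexivity].
Qed.

Lemma Q2R_Qnat (n : nat) : Q2R (Qnat n) = INR n.
Proof. unfold Qnat, Q2R, inject_Z. simpl. rewrite INR_IZR_INZ. field. Qed.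

Lemma Q2R_round_down_le (q : Q) : Q2R (Qround_down q) <= Q2R q.
Proof.
  apply Qle_Rle. destruct q as [a d]. unfold Qround_down, Qle. simpl.
  rewrite Z.mul_comm. apply Z.mul_div_le. lia.
Qed.

Lemma Q2R_round_up_ge (q : Q) : Q2R q <= Q2R (Qround_up q).
Proof.
  unfold Qround_up. rewrite Q2R_opp.
  pose proof (Q2R_round_down_le (- q)) as Hq. rewrite Q2R_opp in Hq. lra.
Qed.

Lemma Q2R_ln1p_taylor (u : Q) : Q2R (Qln1p_taylor u) = ln1p_taylor (Q2R u).
Proof.
  unfold Qln1p_taylor, ln1p_taylor. repeat (rewrite Q2R_mult || rewrite Q2R_minus).
  generalize (Q2R u). intros r. unfold Q2R. simpl. field.
Qed.

Open Scope Q_scope.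

(* [alpha_trunc x m = (g_m, L_m, s_m)] with [g_m = 1 + x + ... + x^m], [L_m >= ln g_m] obtained from
   [g_(k+1) = g_k (1 + x^(k+1) / g_k)], and [s_m >= sum_(k=1..m) x^k L_k]. *)
Fixpoint alpha_trunc (x : Q) (m : nat) : Q * Q * Q :=
  match m with
  | O => (1, 0, 0)
  | S m' =>
      let '(g, L, s) := alpha_trunc x m' in
      let xm := Qpow_nat x m in
      let L' := Qround_up (L + Qln1p_taylor (Qround_up (xm / g))) in
      (Qred (g + xm), L', Qround_up (s + xm * L'))
  end.

Definition Qalpha_ub (x : Q) (M : nat) : Q :=
  Qround_up ((1 - x) * (snd (alpha_trunc x (S M))
                        + Qpow_nat x (S (S (S M))) / Qpow_nat (1 - x) 2)).

(* [beta_trunc x j m = (g_m, s_m)] with [s_m <= sum_(k=0..m) x^k / g_k^j]. *)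
Fixpoint beta_trunc (x : Q) (j m : nat) : Q * Q :=
  match m with
  | O => (1, 1)
  | S m' =>
      let '(g, s) := beta_trunc x j m' in
      let xm := Qpow_nat x m in
      let g' := Qred (g + xm) in
      (g', Qround_down (s + xm / Qpow_nat g' j))
  end.

Definition Qbeta_lb (x : Q) (j M : nat) : Q :=
  Qround_down ((1 - x) * snd (beta_trunc x j M) + Qpow_nat x (S M) * Qpow_nat (1 - x) j).

Close Scope Q_scope.

Section TruncationSoundness.
Variables (p : R) (x : Q).
Hypothesis Hp : 1 < p.
Hypothesis Hx : Q2R x = / p.

Lemma Q2R_one_sub_x : Q2R (1 - x) = 1 - / p.
Proof. rewrite Q2R_minus, RMicromega.Q2R_1, Hx. reflexivity. Qed.

Lemma Q2R_Qpow_x (k : nat) : Q2R (Qpow_nat x k) = (/ p) ^ k.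
Proof. rewrite Q2R_Qpow_nat, Hx. reflexivity. Qed.

Lemma alpha_trunc_sound (m : nat) :
  Q2R (fst (fst (alpha_trunc x m))) = geomsum p m /\
  ln (geomsum p m) <= Q2R (snd (fst (alpha_trunc x m))).
Proof.
  induction m as [|m IH].
  - simpl. rewrite RMicromega.Q2R_1, RMicromega.Q2R_0, geomsum_0, ln_1. lra.
  - cbn [alpha_trunc]. destruct (alpha_trunc x m) as [[g L] s]. cbn [fst snd] in *.
    destruct IH as [Hg HL]. pose proof (geomsum_ge_1 p Hp m).
    split; [rewrite Q2R_Qred, Q2R_plus, Hg, Q2R_Qpow_x; reflexivity|].
    eapply Rle_trans; [|apply Q2R_round_up_ge]. rewrite Q2R_plus, Q2R_ln1p_taylor.
    apply (ln_geomsum_S_le p Hp m _ _ HL).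
    eapply Rle_trans; [|apply Q2R_round_up_ge].
    rewrite Q2R_div_nz, Q2R_Qpow_x, Hg by lra. lra.
Qed.

Lemma alpha_trunc_sum_sound (M : nat) :
  sum_f_R0 (fun k => (/ p) ^ S k * Q2R (snd (fst (alpha_trunc x (S k))))) M
  <= Q2R (snd (alpha_trunc x (S M))).
Proof.
  assert (Hstep : forall m, Q2R (snd (alpha_trunc x m))
                    + (/ p) ^ S m * Q2R (snd (fst (alpha_trunc x (S m))))
                    <= Q2R (snd (alpha_trunc x (S m)))).
  { intros m. cbn [alpha_trunc]. destruct (alpha_trunc x m) as [[g L] s]. cbn [fst snd].
    eapply Rle_trans; [|apply Q2R_round_up_ge]. rewrite Q2R_plus, Q2R_mult, Q2R_Qpow_x. lra. }
  induction M as [|M IH].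
  - pose proof (Hstep O) as Hbase. change (snd (alpha_trunc x 0)) with 0%Q in Hbase.
    rewrite RMicromega.Q2R_0 in Hbase. cbn [sum_f_R0]. lra.
  - rewrite tech5. pose proof (Hstep (S M)). lra.
Qed.

Lemma Qalpha_ub_sound (M : nat) : alpha p <= Q2R (Qalpha_ub x M).
Proof.
  pose proof (inv_bounds p Hp).
  eapply Rle_trans.
  { apply (alpha_le_trunc p Hp M (fun m => Q2R (snd (fst (alpha_trunc x m))))).
    intros m _. apply alpha_trunc_sound. }
  unfold Qalpha_ub. eapply Rle_trans; [|apply Q2R_round_up_ge].
  rewrite Q2R_mult, Q2R_one_sub_x, Q2R_plus, Q2R_div_nz, Q2R_Qpow_x, Q2R_Qpow_nat, Q2R_one_sub_x.
  - apply Rmult_le_compat_l; [lra|]. pose proof (alpha_trunc_sum_sound M). lra.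
  - rewrite Q2R_Qpow_nat, Q2R_one_sub_x. apply pow_nonzero. lra.
Qed.

Lemma beta_trunc_sound (j m : nat) :
  Q2R (fst (beta_trunc x j m)) = geomsum p m /\
  Q2R (snd (beta_trunc x j m)) <= sum_f_R0 (beta_term j p) m.
Proof.
  induction m as [|m IH].
  - simpl. unfold beta_term. rewrite RMicromega.Q2R_1, geomsum_0, pow1. simpl. lra.
  - cbn [beta_trunc]. destruct (beta_trunc x j m) as [g s]. cbn [fst snd] in *.
    destruct IH as [Hg Hs].
    assert (Hg' : Q2R (Qred (g + Qpow_nat x (S m))) = geomsum p (S m))
      by (rewrite Q2R_Qred, Q2R_plus, Hg, Q2R_Qpow_x; reflexivity).
    split; [exact Hg'|].
    pose proof (geomsum_ge_1 p Hp (S m)).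
    eapply Rle_trans; [apply Q2R_round_down_le|]. rewrite tech5.
    rewrite Q2R_plus, Q2R_div_nz, Q2R_Qpow_x, Q2R_Qpow_nat, Hg'.
    + unfold beta_term at 2, Rdiv. lra.
    + rewrite Q2R_Qpow_nat, Hg'. apply pow_nonzero. lra.
Qed.

Lemma Qbeta_lb_sound (j M : nat) : Q2R (Qbeta_lb x j M) <= beta j p.
Proof.
  pose proof (inv_bounds p Hp).
  eapply Rle_trans; [apply Q2R_round_down_le|].
  eapply Rle_trans; [|apply (beta_ge_trunc p Hp j M)].
  rewrite Q2R_plus, !Q2R_mult, Q2R_Qpow_x, Q2R_Qpow_nat, Q2R_one_sub_x.
  apply Rplus_le_compat_r, Rmult_le_compat_l; [lra | apply beta_trunc_sound].
Qed.

End TruncationSoundness.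

Fixpoint trial_division (z d : Z) (fuel : nat) : bool :=
  match fuel with
  | O => true
  | S fuel' =>
      if Z.ltb z (d * d) then true
      else if Z.eqb (Z.modulo z d) 0 then false
      else trial_division z (d + 1) fuel'
  end.

Definition prime_test (n : nat) : bool :=
  andb (Z.ltb 1 (Z.of_nat n)) (trial_division (Z.of_nat n) 2 n).

Lemma trial_division_prime (z : Z) (fuel : nat) (d : Z) :
  prime z -> (2 <= d)%Z -> trial_division z d fuel = true.
Proof.
  intros Hz. revert d. induction fuel as [|fuel IH]; intros d Hd; simpl; [reflexivity|].
  destruct (Z.ltb z (d * d)) eqn:Hlt; [reflexivity|].
  destruct (Z.eqb (z mod d) 0) eqn:Hmod; [|apply IH; lia].
  apply Z.ltb_ge in Hlt. apply Z.eqb_eq, Z.mod_divide in Hmod; [|lia].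
  pose proof (prime_ge_2 z Hz).
  destruct (prime_divisors z Hz d Hmod) as [E|[E|[E|E]]]; subst; nia.
Qed.

Lemma isprime_prime (n : nat) : isprime n = true -> prime (Z.of_nat n).
Proof. unfold isprime. destruct (prime_dec (Z.of_nat n)); [auto | discriminate]. Qed.

Lemma isprime_ge_2 (n : nat) : isprime n = true -> (2 <= n)%nat.
Proof. intros Hprime. apply isprime_prime, prime_ge_2 in Hprime. lia. Qed.

Lemma prime_test_complete (n : nat) : isprime n = true -> prime_test n = true.
Proof.
  intros Hprime. apply isprime_prime in Hprime. pose proof (prime_ge_2 _ Hprime).
  unfold prime_test. apply andb_true_intro. split.
  - apply Z.ltb_lt. lia.
  - apply trial_division_prime; [exact Hprime | lia].
Qed.

Lemma prime_test_ge_2 (n : nat) : prime_test n = true -> (2 <= n)%nat.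
Proof. unfold prime_test. intros Htest. apply andb_prop in Htest as [Hgt1 _]. apply Z.ltb_lt in Hgt1. lia. Qed.

(* Primes above [small_prime_bound] only get the bounds [alpha_le] and [beta_ge_1_sub]. *)
Definition small_prime_bound : nat := 50.

Definition trunc_order (n : nat) : nat :=
  if Nat.eqb n 2 then 20 else if Nat.ltb n 10 then 10 else if Nat.ltb n 30 then 5 else 3.

Open Scope Q_scope.

Definition Qalpha_prime_ub (n : nat) : Q :=
  if Nat.leb n small_prime_bound then Qalpha_ub (/ Qnat n) (trunc_order n)
  else / (Qnat n * (Qnat n - 1)).

Definition Qbeta_prime_lb (j n : nat) : Q :=
  if Nat.leb n small_prime_bound then Qbeta_lb (/ Qnat n) j (trunc_order n)
  else 1 - Qnat j / (Qnat n * Qnat n).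

Fixpoint alpha_prime_sum_ub (N : nat) : Q :=
  match N with
  | O => 0
  | S n => Qround_up (alpha_prime_sum_ub n + if prime_test (S n) then Qalpha_prime_ub (S n) else 0)
  end.

Definition Qbeta_factor_lb (j n : nat) : Q :=
  if andb (prime_test (S n)) (Nat.leb 3 (S n)) then Qmax 0 (Qbeta_prime_lb j (S n)) else 1.

Fixpoint beta_partial_prod_lb (j N : nat) : Q :=
  match N with
  | O => 1
  | S n => Qround_down (beta_partial_prod_lb j n * Qbeta_factor_lb j n)
  end.

Definition lambda_term_lb (N k : nat) : Q :=
  Qround_down (/ Qnat (S k) * (2 * Qbeta_prime_lb (S k) 2 - 1)
               * Qmax 0 (beta_partial_prod_lb (S k) N * (1 - Qnat (S k) / Qnat N))).

Fixpoint lambda_sum_lb (N J : nat) : Q :=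
  match J with
  | O => lambda_term_lb N 0
  | S J' => Qround_down (lambda_sum_lb N J' + lambda_term_lb N J)
  end.

Definition lambda_ub (N J : nat) : Q :=
  Qalpha_prime_ub 2 + alpha_prime_sum_ub N + / Qnat N - lambda_sum_lb N J.

Close Scope Q_scope.

Lemma Q2R_inv_Qnat (n : nat) : (1 <= n)%nat -> Q2R (/ Qnat n) = / INR n.
Proof.
  intros Hn. rewrite Q2R_inv_nz, Q2R_Qnat; [reflexivity|].
  rewrite Q2R_Qnat. apply not_0_INR. lia.
Qed.

Lemma Qalpha_prime_ub_sound (n : nat) : (2 <= n)%nat -> alpha (INR n) <= Q2R (Qalpha_prime_ub n).
Proof.
  intros Hn. pose proof (INR_gt_1 n Hn) as Hp. unfold Qalpha_prime_ub.
  destruct (Nat.leb n small_prime_bound).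
  - apply Qalpha_ub_sound; [exact Hp | apply Q2R_inv_Qnat; lia].
  - rewrite Q2R_inv_nz; rewrite Q2R_mult, Q2R_minus, Q2R_Qnat, RMicromega.Q2R_1.
    + apply alpha_le, Hp.
    + apply Rmult_integral_contrapositive. lra.
Qed.

Lemma Qbeta_prime_lb_sound (j n : nat) : (2 <= n)%nat -> Q2R (Qbeta_prime_lb j n) <= beta j (INR n).
Proof.
  intros Hn. pose proof (INR_gt_1 n Hn) as Hp. unfold Qbeta_prime_lb.
  destruct (Nat.leb n small_prime_bound).
  - apply Qbeta_lb_sound; [exact Hp | apply Q2R_inv_Qnat; lia].
  - rewrite Q2R_minus, RMicromega.Q2R_1, Q2R_div_nz, Q2R_mult, !Q2R_Qnat.
    + replace (INR j / (INR n * INR n)) with (INR j * (/ INR n * / INR n)) by (field; lra).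
      apply beta_ge_1_sub, Hp.
    + rewrite Q2R_mult, Q2R_Qnat. apply Rmult_integral_contrapositive. lra.
Qed.

Lemma sum_alpha_prime_term_le (N : nat) :
  sum_f_R0 alpha_prime_term N <= Q2R (alpha_prime_sum_ub N).
Proof.
  induction N as [|n IH].
  - cbn. rewrite RMicromega.Q2R_0. unfold alpha_prime_term.
    replace (isprime 0) with false by reflexivity. lra.
  - rewrite tech5. cbn [alpha_prime_sum_ub].
    eapply Rle_trans; [|apply Q2R_round_up_ge]. rewrite Q2R_plus.
    apply Rplus_le_compat; [exact IH|]. unfold alpha_prime_term.
    destruct (isprime (S n)) eqn:Hprime.
    + rewrite (prime_test_complete _ Hprime). apply Qalpha_prime_ub_sound, isprime_ge_2, Hprime.
    + destruct (prime_test (S n)) eqn:Htest; [|rewrite RMicromega.Q2R_0; lra].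
      apply prime_test_ge_2 in Htest.
      eapply Rle_trans; [|apply Qalpha_prime_ub_sound, Htest].
      apply alpha_ge_0, INR_gt_1, Htest.
Qed.

Lemma Qbeta_factor_lb_sound (j n : nat) :
  0 <= Q2R (Qbeta_factor_lb j n) <= beta_factor j n.
Proof.
  unfold Qbeta_factor_lb, beta_factor.
  destruct (Nat.leb 3 (S n)) eqn:Hge3; [|rewrite !Bool.andb_false_r, RMicromega.Q2R_1; lra].
  apply Nat.leb_le in Hge3. rewrite !Bool.andb_true_r.
  assert (Hn : 1 < INR (S n)) by (apply INR_gt_1; lia).
  assert (Hlb := Qbeta_prime_lb_sound j (S n) ltac:(lia)).
  pose proof (beta_ge_0 _ Hn j). pose proof (beta_le_1 _ Hn j).
  destruct (isprime (S n)) eqn:Hprime.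
  - rewrite (prime_test_complete _ Hprime), Q2R_Qmax_0.
    split; [apply Rmax_l | apply Rmax_lub; lra].
  - destruct (prime_test (S n)); [rewrite Q2R_Qmax_0 | rewrite RMicromega.Q2R_1; lra].
    split; [apply Rmax_l | apply Rmax_lub; lra].
Qed.

Lemma beta_partial_prod_lb_sound (j N : nat) :
  Q2R (beta_partial_prod_lb j N) <= beta_partial_prod j N.
Proof.
  induction N as [|n IH]; [simpl; rewrite RMicromega.Q2R_1; lra|].
  cbn [beta_partial_prod_lb]. rewrite beta_partial_prod_S.
  eapply Rle_trans; [apply Q2R_round_down_le|]. rewrite Q2R_mult.
  pose proof (Qbeta_factor_lb_sound j n). pose proof (beta_partial_prod_bounds j n).
  apply Rle_trans with (beta_partial_prod j n * Q2R (Qbeta_factor_lb j n)).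
  - apply Rmult_le_compat_r; lra.
  - apply Rmult_le_compat_l; lra.
Qed.

Lemma lambda_term_lb_sound (N k : nat) : (S k <= N)%nat ->
  Q2R (lambda_term_lb N k) <= lambda_term k.
Proof.
  intros HkN. unfold lambda_term_lb, lambda_term.
  eapply Rle_trans; [apply Q2R_round_down_le|].
  assert (HN : 0 < INR N) by (apply lt_0_INR; lia).
  assert (Hk : 0 < INR (S k)) by (apply lt_0_INR; lia).
  assert (HjN : INR (S k) <= INR N) by (apply le_INR; exact HkN).
  rewrite !Q2R_mult, Q2R_inv_Qnat, Q2R_minus, Q2R_mult, Q2R_Qmax_0 by lia.
  set (c := Rmax 0 _).
  assert (Hc : 0 <= c <= beta_prod (S k)).
  { split; [apply Rmax_l | apply Rmax_lub; [apply beta_prod_bounds|]].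
    rewrite Q2R_mult, Q2R_minus, RMicromega.Q2R_1, Q2R_div_nz, !Q2R_Qnat
      by (rewrite Q2R_Qnat; lra).
    eapply Rle_trans; [|apply (beta_prod_ge (S k) N); [lia | exact HjN]].
    apply Rmult_le_compat_r; [|apply beta_partial_prod_lb_sound].
    assert (INR (S k) / INR N <= 1)
      by (apply (Rmult_le_reg_r (INR N)); [lra | unfold Rdiv; rewrite Rmult_assoc, Rinv_l; lra]).
    lra. }
  assert (Hb := Qbeta_prime_lb_sound (S k) 2 (le_n 2)).
  replace (INR 2) with 2 in Hb by reflexivity.
  pose proof (two_beta_2_sub_1_bounds (S k)).
  assert (0 < / INR (S k)) by (apply Rinv_0_lt_compat; lra).
  replace (Q2R 2) with 2 by (unfold Q2R; simpl; field).
  rewrite !Rmult_assoc. apply Rmult_le_compat_l; [lra|].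
  apply Rle_trans with ((2 * beta (S k) 2 - 1) * c).
  - apply Rmult_le_compat_r; lra.
  - apply Rmult_le_compat_l; lra.
Qed.

Lemma lambda_sum_lb_sound (N J : nat) : (S J <= N)%nat ->
  Q2R (lambda_sum_lb N J) <= sum_f_R0 lambda_term J.
Proof.
  intros HJN. induction J as [|J IH].
  - apply lambda_term_lb_sound, HJN.
  - rewrite tech5. cbn [lambda_sum_lb].
    eapply Rle_trans; [apply Q2R_round_down_le|]. rewrite Q2R_plus.
    apply Rplus_le_compat; [apply IH; lia | apply lambda_term_lb_sound, HJN].
Qed.

Lemma lambda_le_ub (N J : nat) : (S J <= N)%nat -> lambda <= Q2R (lambda_ub N J).
Proof.
  intros HJN. unfold lambda, lambda_ub.
  rewrite Q2R_minus, !Q2R_plus, Q2R_inv_Qnat by lia.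
  pose proof (Qalpha_prime_ub_sound 2 (le_n 2)) as Ha2.
  replace (INR 2) with 2 in Ha2 by reflexivity.
  pose proof (Series_alpha_prime_term_le N ltac:(lia)).
  pose proof (sum_alpha_prime_term_le N).
  pose proof (sum_lambda_term_le_Series J).
  pose proof (lambda_sum_lb_sound N J HJN).
  lra.
Qed.

Lemma lambda_ub_lt : (lambda_ub 1000 11 < - (30 # 1000))%Q.
Proof. vm_compute. reflexivity. Qed.

Theorem corollary5p5 :
  (forall p : nat, isprime p = true -> ex_series (alpha_term (INR p))) /\
  (forall (j p : nat), (1 <= j)%nat -> isprime p = true ->
     ex_series (beta_term j (INR p))) /\
  (forall j : nat, (1 <= j)%nat -> ex_finite_lim_seq (beta_partial_prod j)) /\
  ex_series alpha_prime_term /\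
  ex_series lambda_term /\
  lambda < - (30 / 1000).
Proof.
  split; [|split; [|split; [|split; [|split]]]].
  - intros p Hp. apply ex_series_alpha_term, INR_gt_1, isprime_ge_2, Hp.
  - intros j p _ Hp. apply ex_series_beta_term, INR_gt_1, isprime_ge_2, Hp.
  - intros j _. apply ex_finite_lim_beta_partial_prod.
  - apply ex_series_alpha_prime_term.
  - apply ex_series_lambda_term.
  - eapply Rle_lt_trans; [apply (lambda_le_ub 1000 11); lia|].
    replace (- (30 / 1000)) with (Q2R (- (30 # 1000))) by (unfold Q2R; simpl; field).
    apply Qlt_Rlt, lambda_ub_lt.
Qed.
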